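(* In any quiver, normality is anti-hereditary: if $B$ is a normal vertex and $A$ is an ancestor of $B$, then $A$ is normal.
   Context: A quiver consists of a class of vertices and, for each ordered pair of vertices $(A,B)$, a set of edges $A\to B$ (loops and multiple edges allowed). An evolution of length $m\ge 0$ is a sequence $A_0\leftarrow A_1\leftarrow\cdots\leftarrow A_m$ of vertices together with edges $A_k\to A_{k-1}$ ($1\le k\le m$); $A_0$ is its initial and $A_m$ its terminal vertex. Write $A\le B$ ($A$ is an ancestor of $B$) if there is an evolution with initial vertex $A$ and terminal vertex $B$; $A,B$ are isotypic if $A\le B$ and $B\le A$. A vertex $A$ is primitive if every ancestor of $A$ is isotypic to $A$. A full evolution for $X$ is an evolution with primitive initial vertex and terminal vertex $X$. The height $h(X)$ is the smallest length of a full evolution for $X$ ($\infty$ if none). A vertex $A_k$ ($0\le k<m$) of an evolution $A_0\leftarrow\cdots\leftarrow A_m$ is critical if $h(A_k)<\infty$ and $h(A_{k+1})=h(A_k)+1$. The critical ancestors of a vertex $B$ are the critical vertices of full evolutions terminating at $B$. $B$ is normal if any two critical ancestors of $B$ of equal height are isotypic. *)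

From Stdlib Require Import Arith.
Set Implicit Arguments.

Section Quiver.
Variable V : Type.
Variable E : V -> V -> Type.

Record evolution := Evolution {
  len : nat;
  vtx : nat -> V;
  edg : forall k, k < len -> E (vtx (S k)) (vtx k)
}.

Definition initial (ev : evolution) : V := vtx ev 0.
Definition terminal (ev : evolution) : V := vtx ev (len ev).

Definition ancestor (A B : V) : Prop :=
  exists ev : evolution, initial ev = A /\ terminal ev = B.

Definition isotypic (A B : V) : Prop := ancestor A B /\ ancestor B A.

Definition primitive (A : V) : Prop := forall C, ancestor C A -> isotypic C A.

Definition full_evolution_for (X : V) (ev : evolution) : Prop :=
  primitive (initial ev) /\ terminal ev = X.

Definition has_full_evol_of_len (X : V) (n : nat) : Prop :=
  exists ev, full_evolution_for X ev /\ len ev = n.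

Definition height_is (X : V) (n : nat) : Prop :=
  has_full_evol_of_len X n /\ forall m, has_full_evol_of_len X m -> n <= m.

Definition critical_at (ev : evolution) (k : nat) : Prop :=
  k < len ev /\
  exists n, height_is (vtx ev k) n /\ height_is (vtx ev (S k)) (S n).

Definition critical_ancestor (C B : V) : Prop :=
  exists ev k, full_evolution_for B ev /\ critical_at ev k /\ vtx ev k = C.

Definition normal (B : V) : Prop :=
  forall C D n, critical_ancestor C B -> critical_ancestor D B ->
    height_is C n -> height_is D n -> isotypic C D.

End Quiver.

(* A full evolution for A followed by any evolution from A to B is a full
   evolution for B with the same prefix, so every critical ancestor of A is a
   critical ancestor of B; normality of B then applies verbatim to A. *)
From Stdlib Require Import Arith Lia.

Section Concatenation.
Variable V : Type.
Variable E : V -> V -> Type.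

Definition concat_vtx (ev1 ev2 : evolution E) (i : nat) : V :=
  if i <=? len ev1 then vtx ev1 i else vtx ev2 (i - len ev1).

Lemma concat_vtx_l (ev1 ev2 : evolution E) i :
  i <= len ev1 -> concat_vtx ev1 ev2 i = vtx ev1 i.
Proof. intros Hi. unfold concat_vtx. now rewrite (proj2 (Nat.leb_le _ _) Hi). Qed.

Lemma concat_vtx_r (ev1 ev2 : evolution E) i :
  terminal ev1 = initial ev2 -> len ev1 <= i ->
  concat_vtx ev1 ev2 i = vtx ev2 (i - len ev1).
Proof.
  intros Hjoin Hi. unfold concat_vtx.
  destruct (Nat.leb_spec i (len ev1)) as [Hle | Hgt]; [|reflexivity].
  replace i with (len ev1) by lia. rewrite Nat.sub_diag. exact Hjoin.
Qed.

Lemma concat_edg (ev1 ev2 : evolution E) (Hjoin : terminal ev1 = initial ev2) k :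
  k < len ev1 + len ev2 -> E (concat_vtx ev1 ev2 (S k)) (concat_vtx ev1 ev2 k).
Proof.
  intros Hk. destruct (le_lt_dec (S k) (len ev1)) as [Hl | Hr].
  - rewrite !concat_vtx_l by lia. exact (edg ev1 Hl).
  - rewrite !concat_vtx_r by (assumption || lia).
    replace (S k - len ev1) with (S (k - len ev1)) by lia.
    assert (Hk2 : k - len ev1 < len ev2) by lia.
    exact (edg ev2 Hk2).
Qed.

Definition concat {ev1 ev2 : evolution E} (Hjoin : terminal ev1 = initial ev2) :
  evolution E :=
  @Evolution V E (len ev1 + len ev2) (concat_vtx ev1 ev2) (concat_edg ev1 ev2 Hjoin).

Lemma initial_concat {ev1 ev2 : evolution E} (Hjoin : terminal ev1 = initial ev2) :
  initial (concat Hjoin) = initial ev1.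
Proof. apply concat_vtx_l. lia. Qed.

Lemma terminal_concat {ev1 ev2 : evolution E} (Hjoin : terminal ev1 = initial ev2) :
  terminal (concat Hjoin) = terminal ev2.
Proof.
  unfold terminal. simpl. rewrite concat_vtx_r by (assumption || lia).
  f_equal. lia.
Qed.

Lemma critical_at_concat {ev1 ev2 : evolution E} (Hjoin : terminal ev1 = initial ev2) k :
  critical_at ev1 k -> critical_at (concat Hjoin) k.
Proof.
  intros [Hk Hheights]. split; simpl; [lia|].
  rewrite !concat_vtx_l by lia. exact Hheights.
Qed.

Lemma critical_ancestor_ancestor (A B C : V) :
  ancestor E A B -> critical_ancestor E C A -> critical_ancestor E C B.
Proof.
  intros [ev2 [Hinit2 Hterm2]] [ev1 [k [[Hprim Hterm1] [Hcrit Hvtx]]]].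
  assert (Hjoin : terminal ev1 = initial ev2) by congruence.
  exists (concat Hjoin), k. split; [split | split].
  - now rewrite initial_concat.
  - now rewrite terminal_concat.
  - now apply critical_at_concat.
  - simpl. rewrite concat_vtx_l; [exact Hvtx | apply Nat.lt_le_incl, Hcrit].
Qed.

End Concatenation.

Theorem lemma4p1 (V : Type) (E : V -> V -> Type) (A B : V) :
  normal E B -> ancestor E A B -> normal E A.
Proof.
  intros HB HAB C D n HC HD.
  apply (HB C D n); eapply critical_ancestor_ancestor; eassumption.
Qed.
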